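(* Let $\eta>0$, $F(p)=-\eta\sum_{i=1}^N\log p_i$, and $\tilde\Phi(L)=\min_{p\in\Delta_N}\langle L,p\rangle+F(p)$. Then $\tilde\Phi$ is $(2,1/\eta)$-differentially consistent.
   Context: $\Delta_N$ is the probability simplex in $\mathbb{R}^N$. A function $f:\mathbb{R}^N\to\mathbb{R}$ is $(\gamma,\epsilon)$-differentially consistent if it is twice differentiable and $-\nabla^2_{ii}f\le\epsilon(\nabla_if)^\gamma$ for all $i\in[N]$. *)

From mathcomp Require Import all_boot all_order all_algebra.
From mathcomp Require Import all_classical all_reals all_analysis.
Set Implicit Arguments. Unset Strict Implicit. Unset Printing Implicit Defensive.
Import Order.TTheory GRing.Theory Num.Theory.
Import numFieldNormedType.Exports.
Local Open Scope ring_scope.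
Local Open Scope classical_set_scope.

(* R^N is represented by row vectors 'rV[R]_N; coordinate i of x is x 0 i. *)

Definition unitv (R : realType) (N : nat) (i : 'I_N) : 'rV[R]_N := delta_mx 0 i.

Definition partial (R : realType) (N : nat) (i : 'I_N)
  (f : 'rV[R]_N -> R) (x : 'rV[R]_N) : R := 'D_(unitv R i) f x.

Definition twice_differentiable (R : realType) (N : nat) (f : 'rV[R]_N -> R) :=
  (forall x, differentiable f x) /\
  (forall (i : 'I_N) x, differentiable (partial i f) x).

(* (gamma, eps)-differential consistency; gamma is taken in nat here
   (the statement only needs gamma = 2). *)
Definition differentially_consistent (R : realType) (N : nat)
  (gamma : nat) (eps : R) (f : 'rV[R]_N -> R) :=
  twice_differentiable f /\
  (forall (i : 'I_N) (x : 'rV[R]_N),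
      - partial i (partial i f) x <= eps * (partial i f x) ^+ gamma).

(* points of the probability simplex where F is finite (all p_i > 0);
   on the boundary F = +oo, so they never contribute to the minimum *)
Definition open_simplex (R : realType) (N : nat) : set 'rV[R]_N :=
  [set p | (forall i, 0 < p 0 i) /\ \sum_(i < N) p 0 i = 1].

Definition log_barrier (R : realType) (N : nat) (eta : R) (p : 'rV[R]_N) : R :=
  - eta * \sum_(i < N) ln (p 0 i).

(* Phi~(L) = min_{p in simplex} <L,p> + F(p)  (the minimum is attained,
   so it equals the infimum) *)
Definition Phi_tilde (R : realType) (N : nat) (eta : R) (L : 'rV[R]_N) : R :=
  inf [set \sum_(i < N) L 0 i * p 0 i + log_barrier eta p
      | p in @open_simplex R N].

(* The minimum defining [Phi_tilde eta L] is attained at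
   p_i = eta / (L_i + lambda(L)), where the Lagrange multiplier lambda(L) is the
   shift making p a probability vector (intermediate value theorem); optimality
   is Gibbs' inequality ln t <= t - 1.  Evaluating the objectives of L and L' at
   both minimizers sandwiches Phi(L') - Phi(L) between <L' - L, p(L')> and
   <L' - L, p(L)>, so the gradient of Phi is p as soon as p is continuous.
   Instead of the implicit function theorem we use exact secant identities: with
   the weights w_i = 1 / ((L_i + lambda(L)) (L'_i + lambda(L'))) normalised to
   c_i, one has lambda(L') - lambda(L) = - sum_i (L' - L)_i c_i, so lambda is
   1-Lipschitz, and p_i(L') - p_i(L) = sum_j (L' - L)_j eta w_i (c_j - delta_ij).
   At L' = L this gives -d_ii Phi = (p_i^2 / eta) (1 - c_i) <= p_i^2 / eta. *)

From HB Require Import structures.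
From mathcomp Require Import all_boot all_order all_algebra.
From mathcomp Require Import all_classical all_reals all_analysis.
From mathcomp Require Import ring lra.
Set Implicit Arguments. Unset Strict Implicit. Unset Printing Implicit Defensive.
Import Order.TTheory GRing.Theory Num.Theory.
Import numFieldNormedType.Exports.
Local Open Scope ring_scope.
Local Open Scope classical_set_scope.

Lemma ler_mx_coord_norm (K : realDomainType) m n (A : 'M[K]_(m, n)) i j :
  `|A i j| <= `|A|.
Proof.
have -> : `|A| = mx_norm A by [].
rewrite mx_normrE.
exact: (le_bigmax 0 (fun ij : 'I_m * 'I_n => `|A ij.1 ij.2|) (i, j)).
Qed.

Lemma sum_continuous_at (T : topologicalType) (K : numFieldType) (I : finType)
    (F : I -> T -> K) x :
  (forall i, {for x, continuous (F i)}) ->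
  {for x, continuous (fun y => \sum_i F i y)}.
Proof. by move=> Fc; apply: cvg_big => // [|i _]; [exact: add_continuous|exact: Fc]. Qed.

Section SecantCriterion.
Variables (R : realType) (n : nat) (f : 'rV[R]_n -> R) (g : 'I_n -> 'rV[R]_n -> R).
Variable x : 'rV[R]_n.
Hypothesis g_cont : forall i, {for x, continuous (g i)}.

Lemma secant_bound_differentiable :
  (forall y, `|f y - f x - \sum_i (y - x) 0 i * g i x|
     <= \sum_i `|(y - x) 0 i| * `|g i y - g i x|) ->
  differentiable f x /\ (forall i, 'D_(unitv R i) f x = g i x).
Proof.
move=> f_secant.
pose dfx (h : 'rV[R]_n) := \sum_i h 0 i * g i x.
have dfx_lin : linear dfx.
  move=> a u v; rewrite /dfx scaler_sumr -big_split; apply: eq_bigr => i _.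
  by rewrite !mxE mulrDl -mulrA.
pose df : {linear 'rV[R]_n -> R} := HB.pack dfx (GRing.isLinear.Build _ _ _ _ _ dfx_lin).
have df_cont : continuous df.
  suff : continuous dfx by [].
  move=> h; apply: sum_continuous_at => i.
  by apply: continuousM; [exact: coord_continuous | exact: cst_continuous].
have f_little_o : f \o shift x = cst (f x) + df +o_ (0 : 'rV[R]_n) id.
  apply/eqaddoP => eps eps_gt0.
  (* [n.+1] rather than [n], so that the division also makes sense for [n = 0]. *)
  have e_gt0 : 0 < eps / n.+1%:R by rewrite divr_gt0.
  have g_near i : \forall h \near (0 : 'rV[R]_n), `|g i x - g i (h + x)| < eps / n.+1%:R.
    move: (@g_cont i) => /cvgr_dist_lt /(_ _ e_gt0) /(nbhs0P _ x).1.
    by apply: filterS => h; rewrite [x + h]addrC.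
  apply: filterS (filter_forall _ g_near) => h g_h.
  rewrite /= !fctE opprD addrA.
  have := f_secant (h + x); rewrite addrK => /le_trans; apply.
  apply: le_trans (_ : \sum_(i < n) `|h| * (eps / n.+1%:R) <= _).
    apply: ler_sum => i _; apply: ler_pM => //; first exact: ler_mx_coord_norm.
    by rewrite distrC ltW.
  rewrite sumr_const card_ord -[_ *+ n]mulr_natr -mulrA [leRHS]mulrC ler_wpM2l //.
  by rewrite mulrAC ler_pdivrMr ?ltr0n // ler_pM2l // ler_nat.
have dfE : 'd f x = df :> (_ -> _) := diff_unique df_cont f_little_o.
have f_diff : differentiable f x by apply/diff_locallyP; rewrite dfE.
split=> // i; rewrite deriveE // dfE /= /dfx (bigD1 i) //= big1 => [|j ji].
  by rewrite /unitv mxE !eqxx mul1r addr0.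
by rewrite /unitv mxE (negbTE ji) andbF mul0r.
Unshelve. all: by end_near.
Qed.

Lemma secant_eq_differentiable :
  (forall y, f y - f x = \sum_i (y - x) 0 i * g i y) ->
  differentiable f x /\ (forall i, 'D_(unitv R i) f x = g i x).
Proof.
move=> f_secant; apply: secant_bound_differentiable => y.
rewrite f_secant -sumrB (le_trans (ler_norm_sum _ _ _)) //.
by apply: ler_sum => i _; rewrite -mulrBr normrM.
Qed.

End SecantCriterion.

Lemma ln_sub_le_div_subr1 (R : realType) (x y : R) : 0 < x -> 0 < y ->
  ln x - ln y <= x / y - 1.
Proof.
move=> x_gt0 y_gt0; rewrite -ln_div ?posrE //.
have xy_gt0 : 0 < x / y by rewrite divr_gt0.
by have := @le_ln1Dx _ (x / y - 1); rewrite subrKC; apply; lra.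
Qed.

Section LogBarrierMinimizer.
Variables (R : realType) (n : nat) (eta : R).
Hypotheses (n_gt0 : (0 < n)%N) (eta_gt0 : 0 < eta).

Definition is_lagrange_multiplier (L : 'rV[R]_n) (l : R) :=
  (forall i, 0 < L 0 i + l) /\ \sum_i eta / (L 0 i + l) = 1.

Lemma lagrange_multiplier_exists L : exists l, is_lagrange_multiplier L l.
Proof.
have [i0 _ L_min] := @arg_minP _ R _ (Ordinal n_gt0) xpredT (fun i => L 0 i) isT.
pose G l := \sum_i eta / (L 0 i + l).
pose l0 := eta - L 0 i0; pose l1 := n%:R * eta - L 0 i0.
have n_ge1 : 1 <= n%:R :> R by rewrite ler1n.
have shift_ge l i : l0 <= l -> eta <= L 0 i + l.
  by have := L_min i isT; rewrite /l0; lra.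
have l0_le_l1 : l0 <= l1 by rewrite lerD2r ler_peMl // ltW.
have G_l0 : 1 <= G l0.
  rewrite /G (bigD1 i0) //= {2}/l0 subrKC divff ?gt_eqF // lerDl.
  apply: sumr_ge0 => i _; rewrite divr_ge0 ?ltW //.
  exact: lt_le_trans eta_gt0 (shift_ge _ _ _).
have G_l1 : G l1 <= 1.
  apply: le_trans (_ : \sum_(i < n) n%:R^-1 <= 1); last first.
    by rewrite sumr_const card_ord -[_ *+ n]mulr_natr mulVf // pnatr_eq0 -lt0n.
  apply: ler_sum => i _.
  have n_eta_le : n%:R * eta <= L 0 i + l1 by have := L_min i isT; rewrite /l1; lra.
  rewrite ler_pdivrMr ?(lt_le_trans _ n_eta_le) ?mulr_gt0 ?ltr0n //.
  by rewrite ler_pdivlMl ?ltr0n.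
have G_cont : {within `[l0, l1], continuous G}.
  apply: continuous_in_subspaceT => l /[!inE] /= /andP[l0_le _].
  apply: sum_continuous_at => i; apply: continuousM; first exact: cst_continuous.
  apply: continuousV; first by rewrite gt_eqF // (lt_le_trans eta_gt0) ?shift_ge.
  by apply: continuousD; [exact: cst_continuous | exact: cvg_id].
have G_between : Num.min (G l0) (G l1) <= 1 <= Num.max (G l0) (G l1).
  by rewrite ge_min G_l1 orbT le_max G_l0.
have [l /[!in_itv] /= /andP[l0_le _] G_l] := IVT l0_le_l1 G_cont G_between.
exists l; split=> // i.
exact: lt_le_trans eta_gt0 (shift_ge _ _ l0_le).
Qed.

Definition lagrange_multiplier (L : 'rV[R]_n) := xget 0 (is_lagrange_multiplier L).
Definition shifted (L : 'rV[R]_n) i := L 0 i + lagrange_multiplier L.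
Definition minimizer (L : 'rV[R]_n) : 'rV[R]_n := \row_i (eta / shifted L i).
Definition objective (L q : 'rV[R]_n) := \sum_i L 0 i * q 0 i + log_barrier eta q.

Lemma lagrange_multiplierP L : is_lagrange_multiplier L (lagrange_multiplier L).
Proof. by apply: xgetPex; exact: lagrange_multiplier_exists. Qed.

Lemma shifted_gt0 L i : 0 < shifted L i.
Proof. exact: (lagrange_multiplierP L).1. Qed.

Lemma minimizerE L i : minimizer L 0 i = eta / shifted L i.
Proof. by rewrite mxE. Qed.

Lemma minimizer_gt0 L i : 0 < minimizer L 0 i.
Proof. by rewrite minimizerE divr_gt0 ?shifted_gt0. Qed.

Lemma sum_minimizer L : \sum_i minimizer L 0 i = 1.
Proof.
by rewrite -(lagrange_multiplierP L).2; apply: eq_bigr => i _; rewrite minimizerE.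
Qed.

Lemma minimizer_open_simplex L : open_simplex (minimizer L).
Proof. by split; [exact: minimizer_gt0 | exact: sum_minimizer]. Qed.

Lemma objective_minimizer_le L q :
  open_simplex q -> objective L (minimizer L) <= objective L q.
Proof.
move=> [q_gt0 sum_q]; set p := minimizer L.
have gibbs i : eta * ln (q 0 i) - eta * ln (p 0 i)
    <= shifted L i * q 0 i - shifted L i * p 0 i.
  have a_gt0 := shifted_gt0 L i; have q_i_gt0 := q_gt0 i.
  have -> : shifted L i * q 0 i - shifted L i * p 0 i = eta * (q 0 i / p 0 i - 1).
    by rewrite /p minimizerE; field; rewrite !lt0r_neq0.
  rewrite -mulrBr ler_pM2l //.
  exact: ln_sub_le_div_subr1 (q_gt0 i) (minimizer_gt0 L i).
have : \sum_i (eta * ln (q 0 i) - eta * ln (p 0 i))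
    <= \sum_i (shifted L i * q 0 i - shifted L i * p 0 i).
  by apply: ler_sum => i _; exact: gibbs.
rewrite !sumrB -!mulr_sumr.
have -> : \sum_i (shifted L i * q 0 i) - \sum_i (shifted L i * p 0 i)
    = \sum_i L 0 i * q 0 i - \sum_i L 0 i * p 0 i
      + lagrange_multiplier L * (\sum_i q 0 i - \sum_i p 0 i).
  rewrite mulrBr !mulr_sumr -!sumrB -big_split /=; apply: eq_bigr => i _.
  by rewrite /shifted; ring.
rewrite sum_q sum_minimizer subrr mulr0 addr0 /objective /log_barrier.
lra.
Qed.

Lemma Phi_tildeE L : Phi_tilde eta L = objective L (minimizer L).
Proof.
rewrite /Phi_tilde; set S := [set _ | _ in _].
have S_min : S (objective L (minimizer L)).
  by exists (minimizer L) => //; exact: minimizer_open_simplex.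
have S_lb : lbound S (objective L (minimizer L)).
  by move=> _ [q q_simplex <-]; exact: objective_minimizer_le.
apply/le_anti/andP; split; first by apply: ge_inf => //; exists (objective L (minimizer L)).
by apply: lb_le_inf => //; exists (objective L (minimizer L)).
Qed.

Definition secant_weight (x y : 'rV[R]_n) i := (shifted x i * shifted y i)^-1.
Definition secant_coef (x y : 'rV[R]_n) i :=
  secant_weight x y i / \sum_j secant_weight x y j.

Lemma secant_weight_gt0 x y i : 0 < secant_weight x y i.
Proof. by rewrite invr_gt0 mulr_gt0 ?shifted_gt0. Qed.

Lemma sum_secant_weight_gt0 x y : 0 < \sum_j secant_weight x y j.
Proof.
rewrite (bigD1 (Ordinal n_gt0)) //= ltr_pwDl ?secant_weight_gt0 //.
by apply: sumr_ge0 => j _; exact/ltW/secant_weight_gt0.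
Qed.

Lemma secant_coef_ge0 x y i : 0 <= secant_coef x y i.
Proof. by rewrite ltW // divr_gt0 ?secant_weight_gt0 ?sum_secant_weight_gt0. Qed.

Lemma sum_secant_coef x y : \sum_i secant_coef x y i = 1.
Proof. by rewrite -mulr_suml divff // gt_eqF ?sum_secant_weight_gt0. Qed.

Lemma lagrange_multiplier_secant x y :
  lagrange_multiplier y - lagrange_multiplier x
  = - \sum_i (y - x) 0 i * secant_coef x y i.
Proof.
set d := _ - _; set W := \sum_j secant_weight x y j.
have term i : minimizer x 0 i - minimizer y 0 i
    = eta * (((y - x) 0 i + d) * secant_weight x y i).
  have := shifted_gt0 x i; have := shifted_gt0 y i.
  rewrite !minimizerE /secant_weight /d /shifted !mxE => ? ?.
  by field; rewrite !lt0r_neq0.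
have balance : \sum_i (y - x) 0 i * secant_weight x y i + d * W = 0.
  apply: (mulfI (lt0r_neq0 eta_gt0)).
  transitivity (\sum_i (minimizer x 0 i - minimizer y 0 i)).
    rewrite /W mulr_sumr -big_split mulr_sumr; apply: eq_bigr => i _ /=.
    by rewrite term; ring.
  by rewrite sumrB !sum_minimizer subrr mulr0.
have W_gt0 : 0 < W := sum_secant_weight_gt0 x y.
rewrite /secant_coef; under eq_bigr do rewrite mulrA; rewrite -mulr_suml -/W.
have -> : \sum_i (y - x) 0 i * secant_weight x y i = - (d * W) by lra.
by field; rewrite lt0r_neq0.
Qed.

Lemma lagrange_multiplier_lipschitz x y :
  `|lagrange_multiplier y - lagrange_multiplier x| <= `|y - x|.
Proof.
rewrite lagrange_multiplier_secant normrN (le_trans (ler_norm_sum _ _ _)) //.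
rewrite -[leRHS]mulr1 -(sum_secant_coef x y) mulr_sumr; apply: ler_sum => i _.
rewrite normrM (ger0_norm (secant_coef_ge0 _ _ _)) ler_wpM2r ?secant_coef_ge0 //.
exact: ler_mx_coord_norm.
Qed.

Lemma lagrange_multiplier_continuous x : {for x, continuous lagrange_multiplier}.
Proof.
apply/(cvgrPdist_lt (FF := nbhs_filter x)) => e e_gt0.
have := cvgr_dist_lt (FF := nbhs_filter x) (fun y => y) x cvg_id e e_gt0.
apply: filterS => y; exact/le_lt_trans/lagrange_multiplier_lipschitz.
Qed.

Lemma shifted_continuous x i : {for x, continuous (shifted^~ i)}.
Proof.
by apply: continuousD; [exact: coord_continuous | exact: lagrange_multiplier_continuous].
Qed.

Lemma minimizer_continuous x i : {for x, continuous (fun y => minimizer y 0 i)}.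
Proof.
have -> : (fun y => minimizer y 0 i) = fun y => eta / shifted y i.
  by apply/funext => y; rewrite minimizerE.
apply: continuousM; first exact: cst_continuous.
by apply: continuousV; [rewrite gt_eqF ?shifted_gt0 | exact: shifted_continuous].
Qed.

Lemma secant_coef_continuous x y i : {for y, continuous (secant_coef x ^~ i)}.
Proof.
have weight_cont j : {for y, continuous (secant_weight x ^~ j)}.
  apply: continuousV; first by rewrite gt_eqF ?mulr_gt0 ?shifted_gt0.
  by apply: continuousM; [exact: cst_continuous | exact: shifted_continuous].
apply: continuousM; first exact: weight_cont.
apply: continuousV; first by rewrite gt_eqF ?sum_secant_weight_gt0.
exact: sum_continuous_at.
Qed.

Definition minimizer_slope (x y : 'rV[R]_n) i j :=
  eta * secant_weight x y i * (secant_coef x y j - (i == j)%:R).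

Lemma minimizer_secant x y i :
  minimizer y 0 i - minimizer x 0 i = \sum_j (y - x) 0 j * minimizer_slope x y i j.
Proof.
have pick_i : \sum_j (y - x) 0 j * (i == j)%:R = (y - x) 0 i.
  rewrite (bigD1 i) //= eqxx mulr1 big1 ?addr0 // => j.
  by rewrite eq_sym => /negbTE ->; rewrite mulr0.
have -> : \sum_j (y - x) 0 j * minimizer_slope x y i j = eta * secant_weight x y i
    * (\sum_j (y - x) 0 j * secant_coef x y j - \sum_j (y - x) 0 j * (i == j)%:R).
  by rewrite -sumrB mulr_sumr; apply: eq_bigr => j _; rewrite /minimizer_slope; ring.
rewrite pick_i -[\sum_j _ * secant_coef _ _ _]opprK -lagrange_multiplier_secant.
have := shifted_gt0 x i; have := shifted_gt0 y i.
rewrite !minimizerE /secant_weight /shifted !mxE => ? ?.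
by field; rewrite !lt0r_neq0.
Qed.

Lemma differentiable_minimizer x i :
  differentiable (fun y => minimizer y 0 i) x /\
  (forall j, 'D_(unitv R j) (fun y => minimizer y 0 i) x = minimizer_slope x x i j).
Proof.
apply: (secant_eq_differentiable (g := fun j y => minimizer_slope x y i j)) => [j|y].
  2: exact: minimizer_secant.
apply: continuousM; last first.
  by apply: continuousB; [exact: secant_coef_continuous | exact: cst_continuous].
apply: continuousM; first exact: cst_continuous.
apply: continuousV; first by rewrite gt_eqF ?mulr_gt0 ?shifted_gt0.
by apply: continuousM; [exact: cst_continuous | exact: shifted_continuous].
Qed.

Lemma objective_shift x y q :
  objective y q - objective x q = \sum_i (y - x) 0 i * q 0 i.
Proof.
rewrite /objective opprD addrACA subrr addr0 -sumrB.
by apply: eq_bigr => i _; rewrite !mxE mulrBl.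
Qed.

Lemma differentiable_Phi_tilde x :
  differentiable (Phi_tilde eta) x /\
  (forall i, 'D_(unitv R i) (Phi_tilde eta) x = minimizer x 0 i).
Proof.
apply: (secant_bound_differentiable (g := fun i y => minimizer y 0 i)) => [i|y].
  exact: minimizer_continuous.
rewrite !Phi_tildeE.
have upper := objective_minimizer_le y (minimizer_open_simplex x).
have lower := objective_minimizer_le x (minimizer_open_simplex y).
have shift_x := objective_shift x y (minimizer x).
have shift_y := objective_shift x y (minimizer y).
set E := \sum_i (y - x) 0 i * (minimizer y 0 i - minimizer x 0 i).
have E_split : E = \sum_i (y - x) 0 i * minimizer y 0 i
                   - \sum_i (y - x) 0 i * minimizer x 0 i.
  by rewrite -sumrB; apply: eq_bigr => i _; rewrite mulrBr.
apply: (@le_trans _ _ `|E|).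
  by rewrite ler0_norm ?ler_normr ?opprB; [apply/orP; right; lra | lra].
rewrite (le_trans (ler_norm_sum _ _ _)) //.
by apply: ler_sum => i _; rewrite normrM.
Qed.

Lemma minimizer_self_slope_le x i :
  - minimizer_slope x x i i <= eta^-1 * minimizer x 0 i ^+ 2.
Proof.
have a_gt0 := shifted_gt0 x i.
have -> : eta^-1 * minimizer x 0 i ^+ 2 = eta * secant_weight x x i.
  by rewrite minimizerE /secant_weight; field; rewrite !lt0r_neq0.
rewrite /minimizer_slope eqxx -mulrN opprB -[leRHS]mulr1 ler_wpM2l //.
  by rewrite mulr_ge0 ?ltW ?secant_weight_gt0.
by rewrite gerBl secant_coef_ge0.
Qed.

End LogBarrierMinimizer.

Theorem lemma8 (R : realType) (N : nat) (eta : R) :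
  (0 < N)%N -> 0 < eta ->
  differentially_consistent 2 (1 / eta) (Phi_tilde (N:=N) eta).
Proof.
move=> N_gt0 eta_gt0.
have partial_Phi (i : 'I_N) : partial i (Phi_tilde (N:=N) eta) = fun y => minimizer eta y 0 i.
  by apply/funext => y; rewrite /partial (differentiable_Phi_tilde N_gt0 eta_gt0 y).2.
split; first split.
- by move=> x; exact: (differentiable_Phi_tilde N_gt0 eta_gt0 x).1.
- by move=> i x; rewrite partial_Phi; exact: (differentiable_minimizer N_gt0 eta_gt0 x i).1.
- move=> i x; rewrite partial_Phi /partial (differentiable_minimizer N_gt0 eta_gt0 x i).2.
  by rewrite div1r; exact: minimizer_self_slope_le.
Qed.
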